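(* Let $\{C_i\}$ be the square cells of a Cartesian grid, each of side length $\Delta x>0$, and let $\Delta t>0$ be a global time step. Suppose the cell averages of the water height at time $t^n$ satisfy $h_i^n\ge 0$ for all $i$. For every edge $E$ let a real number (numerical mass flux) be given, conservatively: if $E$ separates cells $C_i$ and $C_j$, denote by $\mathcal H_{E,i}$ the flux across $E$ measured with respect to the outward normal of $C_i$, so that $\mathcal H_{E,j}=-\mathcal H_{E,i}$. Define $\mathcal H^+_{E,i}:=\max\{\mathcal H_{E,i},0\}$, the draining time $$\Delta t_{C_i,\mathrm{drain}}:=\frac{\Delta x\,h_i^n}{\sum_{E\subset\partial C_i}\mathcal H^+_{E,i}}\qquad(\text{set to }+\infty\text{ if the denominator is }0),$$ and, for each edge $E$ with $\mathcal H_{E,i}>0$ for one of its two adjacent cells $C_i$ (the upwind cell $C^-(E):=C_i$), the edge time step $\Delta t_E:=\min\{\Delta t,\Delta t_{C^-(E),\mathrm{drain}}\}$; for edges with zero flux put $\Delta t_E:=\Delta t$. Then the water heights produced by the modified finite volume update $$h_i^{n+1}=h_i^n-\frac{1}{\Delta x}\sum_{E\subset\partial C_i}\Delta t_E\,\mathcal H_{E,i}$$ satisfy $h_i^{n+1}\ge 0$ for every cell $C_i$.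
   Context: This is the first (water-height) component of a conservative finite volume scheme for the shallow water equations $h_t+\nabla\cdot(h\vec v)=0$, $(h\vec v)_t+\nabla\cdot(h\vec v\otimes\vec v+\tfrac g2h^2I)=-gh\nabla b$, written in the form $\mathbf u_i^{n+1}=\mathbf u_i^n-\frac{\Delta t}{\Delta x}\big(\sum_{E\subset\partial C_i}\mathcal F_E+\mathcal S_i\big)$, where $\mathcal F_E$ is an arbitrary numerical edge flux (averaged over the edge length and time step) and the first component of $\mathcal S_i$ is zero; $\mathcal H_{E,i}$ is the first component of $\mathcal F_E$ oriented outward from $C_i$. The modification replaces, edge by edge, the global time step $\Delta t$ multiplying the flux by the cut-off step $\Delta t_E$ (equivalently, the outgoing flux of a cell is set to zero after its draining time), while the solution is still advanced by the global step $\Delta t$. *)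

From Stdlib Require Import Reals ZArith.
Open Scope R_scope.

(* Edge fluxes (mass fluxes, first component of the numerical flux):
     Fx i j : flux across the vertical edge between cell (i,j) and (i+1,j),
              measured w.r.t. the outward normal of cell (i,j);
     Fy i j : flux across the horizontal edge between cell (i,j) and (i,j+1),
              measured w.r.t. the outward normal of cell (i,j).
   Conservation H_{E,j} = - H_{E,i} is built in via [Hflux]. *)

Inductive dir := East | West | North | South.

Definition cell := (Z * Z)%type.

Definition Hflux (Fx Fy : Z -> Z -> R) (c : cell) (d : dir) : R :=
  let (i, j) := c in
  match d with
  | East  => Fx i j
  | West  => - Fx (i - 1)%Z j
  | North => Fy i j
  | South => - Fy i (j - 1)%Z
  end.

Definition posp (x : R) : R := Rmax x 0.

Definition sum_edges (f : dir -> R) : R := f East + f West + f North + f South.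

(* Draining time of cell c; None encodes +infinity (zero denominator). *)
Definition drain (dx : R) (h : cell -> R) (Fx Fy : Z -> Z -> R) (c : cell)
  : option R :=
  let s := sum_edges (fun d => posp (Hflux Fx Fy c d)) in
  if Req_EM_T s 0 then None else Some (dx * h c / s).

Definition min_ext (dt : R) (o : option R) : R :=
  match o with None => dt | Some t => Rmin dt t end.

Definition dt_edge (dt dx : R) (h : cell -> R) (Fx Fy : Z -> Z -> R)
  (cl cr : cell) (f : R) : R :=
  if Rlt_dec 0 f then min_ext dt (drain dx h Fx Fy cl)
  else if Rlt_dec f 0 then min_ext dt (drain dx h Fx Fy cr)
  else dt.

Definition dtE (dt dx : R) (h : cell -> R) (Fx Fy : Z -> Z -> R)
  (c : cell) (d : dir) : R :=
  let (i, j) := c in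
  match d with
  | East  => dt_edge dt dx h Fx Fy (i, j) ((i + 1)%Z, j) (Fx i j)
  | West  => dt_edge dt dx h Fx Fy ((i - 1)%Z, j) (i, j) (Fx (i - 1)%Z j)
  | North => dt_edge dt dx h Fx Fy (i, j) (i, (j + 1)%Z) (Fy i j)
  | South => dt_edge dt dx h Fx Fy (i, (j - 1)%Z) (i, j) (Fy i (j - 1)%Z)
  end.

Definition h_next (dt dx : R) (h : cell -> R) (Fx Fy : Z -> Z -> R)
  (c : cell) : R :=
  h c - / dx * sum_edges (fun d => dtE dt dx h Fx Fy c d * Hflux Fx Fy c d).

(* Every edge time step is nonnegative, and on an edge through which cell c
   loses mass, c is the upwind cell, so the step is the cut-off time
   dt_c := min(dt, drain time of c).  Hence the mass leaving c is at most
   dt_c times the total positive outward flux of c, which by the very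
   definition of the draining time is at most dx * h c; incoming fluxes only
   add mass. *)
From Stdlib Require Import Reals ZArith Lra.
Open Scope R_scope.

Definition outflow (Fx Fy : Z -> Z -> R) (c : cell) : R :=
  sum_edges (fun d => posp (Hflux Fx Fy c d)).

Definition dt_cell (dt dx : R) (h : cell -> R) (Fx Fy : Z -> Z -> R)
  (c : cell) : R :=
  min_ext dt (drain dx h Fx Fy c).

Lemma posp_ge0 x : 0 <= posp x.
Proof. unfold posp, Rmax; destruct Rle_dec; lra. Qed.

Lemma posp_id x : 0 <= x -> posp x = x.
Proof. intro; unfold posp, Rmax; destruct Rle_dec; lra. Qed.

Lemma posp_eq0 x : x <= 0 -> posp x = 0.
Proof. intro; unfold posp, Rmax; destruct Rle_dec; lra. Qed.

Lemma sum_edges_le (f g : dir -> R) :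
  (forall d, f d <= g d) -> sum_edges f <= sum_edges g.
Proof.
  intro Hfg; unfold sum_edges.
  pose proof (Hfg East); pose proof (Hfg West);
  pose proof (Hfg North); pose proof (Hfg South); lra.
Qed.

Lemma sum_edges_scale (a : R) (f : dir -> R) :
  sum_edges (fun d => a * f d) = a * sum_edges f.
Proof. unfold sum_edges; ring. Qed.

Lemma outflow_ge0 Fx Fy c : 0 <= outflow Fx Fy c.
Proof.
  unfold outflow; replace 0 with (sum_edges (fun _ => 0)) at 1.
  - apply sum_edges_le; intro; apply posp_ge0.
  - unfold sum_edges; ring.
Qed.

Section CutOff.

Variables (dt dx : R) (h : cell -> R) (Fx Fy : Z -> Z -> R).
Hypotheses (dx_gt0 : 0 < dx) (dt_gt0 : 0 < dt) (h_ge0 : forall c, 0 <= h c).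

Lemma dt_cell_ge0 c : 0 <= dt_cell dt dx h Fx Fy c.
Proof.
  unfold dt_cell, drain, min_ext.
  destruct Req_EM_T as [_ | Hs]; [lra |].
  pose proof (outflow_ge0 Fx Fy c); pose proof (h_ge0 c).
  apply Rmin_glb; [lra |].
  unfold outflow in *.
  apply Rmult_le_pos; [apply Rmult_le_pos | left; apply Rinv_0_lt_compat]; lra.
Qed.

Lemma dt_cell_outflow_le c :
  dt_cell dt dx h Fx Fy c * outflow Fx Fy c <= dx * h c.
Proof.
  unfold dt_cell, drain, min_ext; fold (outflow Fx Fy c).
  pose proof (outflow_ge0 Fx Fy c); pose proof (h_ge0 c).
  destruct Req_EM_T as [Hs | Hs].
  - rewrite Hs, Rmult_0_r; apply Rmult_le_pos; lra.
  - apply Rle_trans with (dx * h c / outflow Fx Fy c * outflow Fx Fy c).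
    + apply Rmult_le_compat_r; [lra | apply Rmin_r].
    + right; field; exact Hs.
Qed.

Lemma dtE_ge0 c d : 0 <= dtE dt dx h Fx Fy c d.
Proof.
  destruct c as [i j]; destruct d; simpl; unfold dt_edge;
    repeat destruct Rlt_dec; solve [lra | apply dt_cell_ge0].
Qed.

Lemma dtE_upwind c d :
  0 < Hflux Fx Fy c d -> dtE dt dx h Fx Fy c d = dt_cell dt dx h Fx Fy c.
Proof.
  destruct c as [i j]; destruct d; simpl; intro Hout; unfold dt_edge;
    repeat destruct Rlt_dec; solve [lra | reflexivity].
Qed.

Lemma edge_mass_le c d :
  dtE dt dx h Fx Fy c d * Hflux Fx Fy c d
  <= dt_cell dt dx h Fx Fy c * posp (Hflux Fx Fy c d).
Proof.
  destruct (Rlt_le_dec 0 (Hflux Fx Fy c d)) as [Hout | Hin].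
  - rewrite dtE_upwind, posp_id by lra; lra.
  - rewrite posp_eq0, Rmult_0_r by exact Hin.
    pose proof (dtE_ge0 c d); nra.
Qed.

End CutOff.

Theorem mainTheorem1 (dx dt : R) (h : cell -> R) (Fx Fy : Z -> Z -> R) :
  0 < dx -> 0 < dt -> (forall c, 0 <= h c) ->
  forall c, 0 <= h_next dt dx h Fx Fy c.
Proof.
  intros Hdx Hdt Hh c.
  assert (Hmass :
    sum_edges (fun d => dtE dt dx h Fx Fy c d * Hflux Fx Fy c d) <= dx * h c).
  { eapply Rle_trans; [apply sum_edges_le; intro d; now apply edge_mass_le |].
    rewrite sum_edges_scale; now apply dt_cell_outflow_le. }
  unfold h_next.
  apply Rle_trans with (h c - / dx * (dx * h c)).
  - right; field; lra.
  - apply Rplus_le_compat_l, Ropp_le_contravar, Rmult_le_compat_l; [| exact Hmass].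
    left; apply Rinv_0_lt_compat, Hdx.
Qed.
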